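(* Let $X$ be a Dedekind complete Riesz space and let $x,y,v,w\in X^{s}_{+}$ with $x\wedge y=0$ and $v\wedge w=0$. Then $$(x+v)\wedge(y+w)=x\wedge w+y\wedge v,$$ and the two summands $x\wedge w$ and $y\wedge v$ are disjoint.
   Context: For a Dedekind complete Riesz space $X$, its sup-completion $X^{s}$ is the set of classes of nonempty upward directed subsets of $X$ under $A\sim B$ iff $\sup_{a\in A}(x\wedge a)=\sup_{b\in B}(x\wedge b)$ for all $x\in X$, with the induced addition, nonnegative scalar multiplication and order; $X\subseteq X^{s}$. It is a lattice-ordered cone in which every nonempty subset has a supremum; $X^s_+=\{x\in X^s:x\ge0\}$; elements $a,b\in X^s_+$ are disjoint if $a\wedge b=0$. *)

From HB Require Import structures.
From mathcomp Require Import all_boot all_order all_algebra.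
From mathcomp Require Import boolp classical_sets reals.
From Stdlib Require Import ClassicalEpsilon.

Set Implicit Arguments.
Unset Strict Implicit.
Unset Printing Implicit Defensive.
Import Order.TTheory GRing.Theory Num.Theory.
Local Open Scope classical_set_scope.
Local Open Scope ring_scope.

Section Riesz.
Context {R : realType} {V : lmodType R} (le : V -> V -> Prop).

Definition is_ub (S : set V) (u : V) : Prop := forall s, S s -> le s u.
Definition is_lb (S : set V) (l : V) : Prop := forall s, S s -> le l s.
Definition is_sup (S : set V) (s : V) : Prop :=
  is_ub S s /\ forall u, is_ub S u -> le s u.
Definition is_inf (S : set V) (i : V) : Prop :=
  is_lb S i /\ forall l, is_lb S l -> le l i.

Definition riesz_space : Prop :=
  (forall x, le x x) /\
  (forall x y, le x y -> le y x -> x = y) /\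
  (forall x y z, le x y -> le y z -> le x z) /\
  (forall x y z, le x y -> le (x + z) (y + z)) /\
  (forall (c : R) x y, le x y -> 0 <= c -> le (c *: x) (c *: y)) /\
  (forall x y, exists s, is_sup [set x; y] s).

Definition dedekind_complete : Prop :=
  forall S : set V, S !=set0 -> (exists u, is_ub S u) -> exists s, is_sup S s.

(** Nonempty upward directed subsets of X: representatives of elements of X^s. *)
Definition updirected (A : set V) : Prop :=
  A !=set0 /\
  forall a b, A a -> A b -> exists c, [/\ A c, le a c & le b c].

Definition meetset (x : V) (A : set V) : set V :=
  [set m | exists2 a, A a & is_inf [set x; a] m].

Definition sequiv (A B : set V) : Prop :=
  forall x s t, is_sup (meetset x A) s -> is_sup (meetset x B) t -> s = t.

Definition sle (A B : set V) : Prop :=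
  forall x s t, is_sup (meetset x A) s -> is_sup (meetset x B) t -> le s t.

Definition sadd (A B : set V) : set V :=
  [set c | exists a b, [/\ A a, B b & c = a + b]].

(** Zero of X^s (the image of 0 \in X under X \subseteq X^s). *)
Definition szero : set V := [set 0].

Definition is_smeet (M A B : set V) : Prop :=
  [/\ updirected M, sle M A, sle M B &
      forall L, updirected L -> sle L A -> sle L B -> sle L M].

Definition smeet (A B : set V) : set V :=
  epsilon (inhabits set0) (fun M => is_smeet M A B).

End Riesz.

(* An element [A] of X^s is determined by the map z |-> z /\ [A] = sup_(a in A) z /\ a
   from X to X, and the lattice operations and the addition of X^s can be read off it:
   z /\ ([A] /\ [B]) = (z /\ [A]) /\ (z /\ [B]) by infinite distributivity, and
   z /\ [A + B] depends only on the maps of [A] and [B], by translation invariance.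
   A positive class is represented by the positive parts of its elements, and two
   disjoint positive classes then have pairwise disjoint representatives. The identity
   thus reduces to its pointwise version in X: for positive a, b, c, d with
   a /\ b = c /\ d = 0, (a + c) /\ (b + d) = a /\ d + b /\ c, so that
   {(a + c) /\ (b + d)} = {a /\ d} + {b /\ c} as sets. Disjointness of the summands
   is immediate: (x /\ w) /\ (y /\ v) <= x /\ y = 0. *)

From HB Require Import structures.
From mathcomp Require Import all_boot all_order all_algebra.
From mathcomp Require Import boolp classical_sets reals.
From Stdlib Require Import ClassicalEpsilon.

Set Implicit Arguments.
Unset Strict Implicit.
Unset Printing Implicit Defensive.
Import GRing.Theory.
Local Open Scope classical_set_scope.
Local Open Scope ring_scope.

Section SupCompletion.
Variables (R : realType) (V : lmodType R) (le : V -> V -> Prop).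
Hypothesis lexx : forall x, le x x.
Hypothesis le_anti : forall x y, le x y -> le y x -> x = y.
Hypothesis le_trans : forall x y z, le x y -> le y z -> le x z.
Hypothesis leD2r : forall x y z, le x y -> le (x + z) (y + z).
Hypothesis has_join : forall x y, exists s, is_sup le [set x; y] s.

Lemma leD2l x y z : le x y -> le (z + x) (z + y).
Proof. by move=> lexy; rewrite ![z + _]addrC; apply: leD2r. Qed.

Lemma leD x y x' y' : le x y -> le x' y' -> le (x + x') (y + y').
Proof. by move=> lexy lexy'; apply: le_trans (leD2r x' lexy) (leD2l y lexy'). Qed.

Lemma leBlDr x y z : le (x - y) z <-> le x (z + y).
Proof.
split=> [|lex]; first by move/(leD2r y); rewrite subrK.
by have := leD2r (- y) lex; rewrite addrK.
Qed.

Lemma leBrDr x y z : le x (z - y) <-> le (x + y) z.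
Proof.
split=> [|lex]; first by move/(leD2r y); rewrite subrK.
by have := leD2r (- y) lex; rewrite addrK.
Qed.

Lemma le_addr x y : le 0 y -> le x (x + y).
Proof. by move=> y_ge0; have := leD2l x y_ge0; rewrite addr0. Qed.

Lemma le_addl x y : le 0 y -> le x (y + x).
Proof. by rewrite addrC; apply: le_addr. Qed.

Lemma sup_uniq S s t : is_sup le S s -> is_sup le S t -> s = t.
Proof. by move=> [ubs lubs] [ubt lubt]; apply: le_anti; [apply: lubs | apply: lubt]. Qed.

Definition join a b : V := epsilon (inhabits 0) (is_sup le [set a; b]).

Lemma joinP a b : is_sup le [set a; b] (join a b).
Proof. exact: epsilon_spec (has_join a b). Qed.

Lemma le_joinl a b : le a (join a b).
Proof. by apply: (joinP a b).1; left. Qed.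

Lemma le_joinr a b : le b (join a b).
Proof. by apply: (joinP a b).1; right. Qed.

Lemma join_lub a b u : le a u -> le b u -> le (join a b) u.
Proof. by move=> leau lebu; apply: (joinP a b).2 => _ [->|->]. Qed.

Lemma joinC a b : join a b = join b a.
Proof. by apply: le_anti; apply: join_lub; (apply: le_joinl || apply: le_joinr). Qed.

Lemma join_mono a b a' b' : le a a' -> le b b' -> le (join a b) (join a' b').
Proof.
move=> leaa' lebb'; apply: join_lub.
  exact: le_trans leaa' (le_joinl _ _).
exact: le_trans lebb' (le_joinr _ _).
Qed.

Definition meet a b : V := a + b - join a b.

Lemma meet_addE a b : meet a b + join a b = a + b.
Proof. exact: subrK. Qed.

Lemma le_meetl a b : le (meet a b) a.
Proof. by apply/leBlDr; apply: leD2l; apply: le_joinr. Qed.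

Lemma le_meetr a b : le (meet a b) b.
Proof. by apply/leBlDr; rewrite addrC; apply: leD2l; apply: le_joinl. Qed.

Lemma meet_glb l a b : le l a -> le l b -> le l (meet a b).
Proof.
move=> lela lelb; apply/leBrDr; rewrite addrC; apply/leBrDr.
apply: join_lub; apply/leBrDr; first exact: leD2l.
by rewrite addrC; apply: leD2r.
Qed.

Lemma meetC a b : meet a b = meet b a.
Proof. by rewrite /meet joinC [a + b]addrC. Qed.

Lemma meet_mono a b a' b' : le a a' -> le b b' -> le (meet a b) (meet a' b').
Proof.
move=> leaa' lebb'; apply: meet_glb.
  exact: le_trans (le_meetl _ _) leaa'.
exact: le_trans (le_meetr _ _) lebb'.
Qed.

Lemma meet_idPl a b : le a b -> meet a b = a.
Proof. by move=> leab; apply: le_anti; [apply: le_meetl | apply: meet_glb]. Qed.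

Lemma meet_inf a b : is_inf le [set a; b] (meet a b).
Proof.
split; first by move=> _ [->|->]; [apply: le_meetl | apply: le_meetr].
by move=> l lbl; apply: meet_glb; apply: lbl; [left | right].
Qed.

Lemma inf_meet a b m : is_inf le [set a; b] m -> m = meet a b.
Proof.
move=> [lbm glbm]; apply: le_anti.
  by apply: meet_glb; apply: lbm; [left | right].
by apply: glbm => _ [->|->]; [apply: le_meetl | apply: le_meetr].
Qed.

Lemma meetDl c a b : meet (c + a) (c + b) = c + meet a b.
Proof.
apply: le_anti; last by apply: meet_glb; apply: leD2l; [apply: le_meetl | apply: le_meetr].
rewrite [c + meet a b]addrC; apply/(leBlDr _ c); apply: meet_glb; apply/leBlDr.
  by rewrite [a + c]addrC; apply: le_meetl.
by rewrite [b + c]addrC; apply: le_meetr.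
Qed.

Lemma meetDr c a b : meet (a + c) (b + c) = meet a b + c.
Proof. by rewrite ![_ + c]addrC meetDl. Qed.

Lemma meet_subadd u p q : le 0 u -> le 0 p -> le 0 q ->
  le (meet u (p + q)) (meet u p + meet u q).
Proof.
move=> u_ge0 p_ge0 q_ge0; set r := meet u (p + q).
have r_le_u : le r u by apply: le_meetl.
apply/(leBlDr _ (meet u q)); apply: meet_glb; apply/leBlDr.
  exact: le_trans r_le_u (le_addr _ (meet_glb u_ge0 q_ge0)).
rewrite -meetDl; apply: meet_glb; last exact: le_meetr.
exact: le_trans r_le_u (le_addl _ p_ge0).
Qed.

Lemma meet_add_disjoint a b c d : le 0 a -> le 0 b -> le 0 c -> le 0 d ->
  meet a b = 0 -> meet c d = 0 -> meet (a + c) (b + d) = meet a d + meet b c.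
Proof.
move=> a_ge0 b_ge0 c_ge0 d_ge0 ab0 cd0.
have ac_ge0 : le 0 (a + c) by rewrite -[0]addr0; apply: leD.
apply: le_anti.
  apply: le_trans (meet_subadd ac_ge0 b_ge0 d_ge0) _.
  rewrite addrC ![meet (a + c) _]meetC; apply: leD.
    apply: le_trans (meet_subadd d_ge0 a_ge0 c_ge0) _.
    by rewrite [meet d c]meetC cd0 addr0 meetC.
  apply: le_trans (meet_subadd b_ge0 a_ge0 c_ge0) _.
  by rewrite [meet b a]meetC ab0 add0r.
set p := meet a d; set q := meet b c.
have pq0 : meet p q = 0.
  apply: le_anti; last by apply: meet_glb; apply: meet_glb.
  by rewrite -ab0; apply: meet_mono; apply: le_meetl.
rewrite -meet_addE pq0 add0r; apply: join_lub; apply: meet_glb.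
- exact: le_trans (le_meetl _ _) (le_addr _ c_ge0).
- exact: le_trans (le_meetr _ _) (le_addl _ b_ge0).
- exact: le_trans (le_meetr _ _) (le_addl _ a_ge0).
- exact: le_trans (le_meetl _ _) (le_addr _ d_ge0).
Qed.

Lemma meet_sup_le S s c u : is_sup le S s ->
  (forall t, S t -> le (meet c t) u) -> le (meet c s) u.
Proof.
(* Each [t = meet c t + join c t - c] of [S] lies below [u + join c s - c], hence so does [s]. *)
move=> [ubs lubs] leu.
have le_s : le s (u + join c s - c).
  apply: lubs => t St; have <- : meet c t + join c t - c = t.
    by rewrite meet_addE addrC addKr.
  by apply: leD2r; apply: leD (leu t St) (join_mono (lexx c) (ubs t St)).
by apply/(leBlDr _ (join c s)); rewrite [c + s]addrC; apply/leBrDr.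
Qed.

Lemma meet_join_le a b c : le (meet a (join b c)) (join (meet a b) (meet a c)).
Proof.
apply: (meet_sup_le (joinP b c)) => _ [->|->].
  exact: le_joinl.
exact: le_joinr.
Qed.

Hypothesis dedekind : dedekind_complete le.

Definition sup (S : set V) : V := epsilon (inhabits 0) (is_sup le S).

Lemma supP S : S !=set0 -> (exists u, is_ub le S u) -> is_sup le S (sup S).
Proof. by move=> S_neq0 S_ub; apply: epsilon_spec; apply: dedekind. Qed.

(* [meetsup A z] is the meet of [z] with the class of [A], computed in X. *)
Definition meetsup (A : set V) (z : V) : V := sup (meetset le z A).

Lemma meetsetE z A : meetset le z A = [set meet z a | a in A].
Proof.
apply/seteqP; split=> [m [a Aa /inf_meet ->]|_ [a Aa <-]]; first by exists a.
by exists a => //; apply: meet_inf.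
Qed.

Lemma meetsupP A z : A !=set0 -> is_sup le (meetset le z A) (meetsup A z).
Proof.
move=> [a Aa]; rewrite /meetsup meetsetE; apply: supP; first by exists (meet z a), a.
by exists z => _ [b _ <-]; apply: le_meetl.
Qed.

Lemma meetsup_ge A z a : A a -> le (meet z a) (meetsup A z).
Proof.
move=> Aa; apply: (meetsupP z (ex_intro _ a Aa)).1.
by rewrite meetsetE; exists a.
Qed.

Lemma meetsup_lub A z u : A !=set0 ->
  (forall a, A a -> le (meet z a) u) -> le (meetsup A z) u.
Proof.
move=> A_neq0 leu; apply: (meetsupP z A_neq0).2.
by rewrite meetsetE => _ [a Aa <-]; apply: leu.
Qed.

Lemma sequivP A B : A !=set0 -> B !=set0 ->
  sequiv le A B <-> meetsup A =1 meetsup B.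
Proof.
move=> A_neq0 B_neq0; split=> [eqAB z|eqAB z s t supAs supBt].
  exact: eqAB (meetsupP z A_neq0) (meetsupP z B_neq0).
by rewrite (sup_uniq supAs (meetsupP z A_neq0)) (sup_uniq supBt (meetsupP z B_neq0)).
Qed.

Lemma sleP A B : A !=set0 -> B !=set0 ->
  sle le A B <-> forall z, le (meetsup A z) (meetsup B z).
Proof.
move=> A_neq0 B_neq0; split=> [leAB z|leAB z s t supAs supBt].
  exact: leAB (meetsupP z A_neq0) (meetsupP z B_neq0).
by rewrite (sup_uniq supAs (meetsupP z A_neq0)) (sup_uniq supBt (meetsupP z B_neq0)).
Qed.

Lemma szero_neq0 : (szero : set V) !=set0.
Proof. by exists 0. Qed.

Lemma meetsup_szero z : meetsup szero z = meet z 0.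
Proof.
apply: le_anti; last exact: meetsup_ge.
by apply: meetsup_lub; [exact: szero_neq0 | move=> a ->].
Qed.

Definition pmeet (A B : set V) : set V := [set meet a b | a in A & b in B].

Lemma updirected_neq0 A : updirected le A -> A !=set0.
Proof. by case. Qed.

Lemma pmeet_neq0 A B : A !=set0 -> B !=set0 -> pmeet A B !=set0.
Proof. by move=> [a Aa] [b Bb]; exists (meet a b), a => //; exists b. Qed.

Lemma sadd_neq0 (A B : set V) : A !=set0 -> B !=set0 -> sadd A B !=set0.
Proof. by move=> [a Aa] [b Bb]; exists (a + b), a, b. Qed.

(* Lets [//] discharge the nonemptiness and directedness side conditions below. *)
Create HintDb set_neq0.
Local Hint Resolve updirected_neq0 szero_neq0 pmeet_neq0 sadd_neq0 : set_neq0.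
Local Hint Extern 0 (_ !=set0) => solve [auto with nocore set_neq0] : core.
Local Hint Extern 0 (updirected _ _) => solve [auto with nocore set_neq0] : core.

Lemma pmeet_updirected A B :
  updirected le A -> updirected le B -> updirected le (pmeet A B).
Proof.
move=> [A_neq0 dirA] [B_neq0 dirB]; split; first exact: pmeet_neq0.
move=> _ _ [a1 A1 [b1 B1 <-]] [a2 A2 [b2 B2 <-]].
have [a [Aa le1 le2]] := dirA _ _ A1 A2; have [b [Bb le1' le2']] := dirB _ _ B1 B2.
by exists (meet a b); split; [exists a => //; exists b | exact: meet_mono ..].
Qed.

Lemma sadd_updirected (A B : set V) :
  updirected le A -> updirected le B -> updirected le (sadd A B).
Proof.
move=> [A_neq0 dirA] [B_neq0 dirB]; split; first exact: sadd_neq0.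
move=> _ _ [a1 [b1 [A1 B1 ->]]] [a2 [b2 [A2 B2 ->]]].
have [a [Aa le1 le2]] := dirA _ _ A1 A2; have [b [Bb le1' le2']] := dirB _ _ B1 B2.
by exists (a + b); split; [exists a, b | exact: leD ..].
Qed.

Lemma meetsup_pmeet A B z : A !=set0 -> B !=set0 ->
  meetsup (pmeet A B) z = meet (meetsup A z) (meetsup B z).
Proof.
move=> A_neq0 B_neq0; apply: le_anti.
  apply: meetsup_lub; first exact: pmeet_neq0.
  move=> _ [a Aa [b Bb <-]]; apply: meet_glb.
    exact: le_trans (meet_mono (lexx z) (le_meetl a b)) (meetsup_ge z Aa).
  exact: le_trans (meet_mono (lexx z) (le_meetr a b)) (meetsup_ge z Bb).
apply: (meet_sup_le (meetsupP z B_neq0)); rewrite meetsetE => _ [b Bb <-].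
rewrite meetC; apply: (meet_sup_le (meetsupP z A_neq0)); rewrite meetsetE => _ [a Aa <-].
apply: le_trans (meetsup_ge z (_ : pmeet A B (meet a b))); last by exists a => //; exists b.
have le_zb := le_meetl (meet z b) (meet z a).
have le_za := le_meetr (meet z b) (meet z a).
apply: meet_glb; first exact: le_trans le_za (le_meetl z a).
by apply: meet_glb; [apply: le_trans le_za (le_meetr z a) | apply: le_trans le_zb (le_meetr z b)].
Qed.

Lemma smeet_spec A B : updirected le A -> updirected le B ->
  is_smeet le (smeet le A B) A B.
Proof.
move=> dirA dirB; apply: (@epsilon_spec _ _ (fun M => is_smeet le M A B)); exists (pmeet A B).
split; first exact: pmeet_updirected.
- by apply/sleP => // z; rewrite meetsup_pmeet //; apply: le_meetl.
- by apply/sleP => // z; rewrite meetsup_pmeet //; apply: le_meetr.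
move=> L dirL /sleP leLA /sleP leLB; apply/sleP => // z.
by rewrite meetsup_pmeet //; apply: meet_glb; [apply: leLA | apply: leLB].
Qed.

Lemma smeet_updirected A B : updirected le A -> updirected le B ->
  updirected le (smeet le A B).
Proof. by move=> dirA dirB; case: (smeet_spec dirA dirB). Qed.

Local Hint Resolve smeet_updirected sadd_updirected pmeet_updirected : set_neq0.

Lemma meetsup_smeet A B z : updirected le A -> updirected le B ->
  meetsup (smeet le A B) z = meet (meetsup A z) (meetsup B z).
Proof.
move=> dirA dirB; have [dirM /sleP leMA /sleP leMB glbM] := smeet_spec dirA dirB.
apply: le_anti; first by apply: meet_glb; [apply: leMA | apply: leMB].
have /sleP lePM : sle le (pmeet A B) (smeet le A B).
  apply: glbM; first exact: pmeet_updirected.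
    by apply/sleP => // z'; rewrite meetsup_pmeet //; apply: le_meetl.
  by apply/sleP => // z'; rewrite meetsup_pmeet //; apply: le_meetr.
by rewrite -meetsup_pmeet //; apply: lePM.
Qed.

Lemma saddC (A B : set V) : sadd A B = sadd B A.
Proof.
by apply/seteqP; split=> _ [a [b [Aa Bb ->]]]; exists b, a; rewrite addrC.
Qed.

Lemma meetsup_saddl_le (A A' B : set V) z : A !=set0 -> A' !=set0 -> B !=set0 ->
  (forall z', le (meetsup A z') (meetsup A' z')) ->
  le (meetsup (sadd A B) z) (meetsup (sadd A' B) z).
Proof.
move=> A_neq0 A'_neq0 B_neq0 leAA'; apply: meetsup_lub => // _ [a [b [Aa Bb ->]]].
have meet_addr z' a' : meet z' (a' + b) = meet (z' - b) a' + b by rewrite -meetDr subrK.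
rewrite meet_addr; apply/leBrDr.
apply: le_trans (le_trans (meetsup_ge _ Aa) (leAA' _)) _.
apply: meetsup_lub => // a' A'a'; apply/leBrDr; rewrite -meet_addr.
by apply: meetsup_ge; exists a', b.
Qed.

Lemma meetsup_sadd (A A' B B' : set V) :
  A !=set0 -> A' !=set0 -> B !=set0 -> B' !=set0 ->
  meetsup A =1 meetsup A' -> meetsup B =1 meetsup B' ->
  meetsup (sadd A B) =1 meetsup (sadd A' B').
Proof.
move=> A_neq0 A'_neq0 B_neq0 B'_neq0 eqA eqB.
have congl (C C' D : set V) : C !=set0 -> C' !=set0 -> D !=set0 ->
    meetsup C =1 meetsup C' -> meetsup (sadd C D) =1 meetsup (sadd C' D).
  move=> C_neq0 C'_neq0 D_neq0 eqC z; apply: le_anti; apply: meetsup_saddl_le => // z'.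
    by rewrite eqC; apply: lexx.
  by rewrite eqC; apply: lexx.
by move=> z; rewrite (congl A A') // saddC (congl B B') // saddC.
Qed.

Lemma sle_szeroP A : A !=set0 ->
  sle le szero A <-> forall z, le (meet z 0) (meetsup A z).
Proof. by move=> A_neq0; rewrite sleP //; under eq_forall do rewrite meetsup_szero. Qed.

Lemma smeet_szeroP A B : updirected le A -> updirected le B ->
  sequiv le (smeet le A B) szero <->
  forall z, meet (meetsup A z) (meetsup B z) = meet z 0.
Proof.
move=> dirA dirB; rewrite sequivP //.
by split=> eqM z; have := eqM z; rewrite meetsup_smeet // meetsup_szero.
Qed.

(* The elements of a positive class need not be positive; their positive parts
   represent the same class (see [meetsup_pos_part]). *)
Definition pos_part (A : set V) : set V := [set join a 0 | a in A].

Lemma pos_part_neq0 A : A !=set0 -> pos_part A !=set0.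
Proof. by move=> [a Aa]; exists (join a 0), a. Qed.

Local Hint Resolve pos_part_neq0 : set_neq0.

Definition nonneg (A : set V) := forall a, A a -> le 0 a.

Lemma pos_part_ge0 A : nonneg (pos_part A).
Proof. by move=> _ [a _ <-]; apply: le_joinr. Qed.

Lemma meetsup_pos_part A : A !=set0 -> sle le szero A ->
  meetsup (pos_part A) =1 meetsup A.
Proof.
move=> A_neq0 /sle_szeroP A_ge0 z; apply: le_anti.
  apply: meetsup_lub => // _ [a Aa <-]; apply: le_trans (meet_join_le _ _ _) _.
  by apply: join_lub; [apply: meetsup_ge | apply: A_ge0].
apply: meetsup_lub => // a Aa; apply: le_trans (meetsup_ge z (_ : pos_part A (join a 0))).
  exact: meet_mono (lexx z) (le_joinl a 0).
by exists a.
Qed.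

Definition pdisjoint (A B : set V) := forall a b, A a -> B b -> meet a b = 0.

Lemma pos_part_pdisjoint A B : updirected le A -> updirected le B ->
  sle le szero A -> sle le szero B -> sequiv le (smeet le A B) szero ->
  pdisjoint (pos_part A) (pos_part B).
Proof.
move=> dirA dirB A_ge0 B_ge0 /(smeet_szeroP dirA dirB) AB0 a b Aa Bb.
have [a_ge0 b_ge0] := (pos_part_ge0 Aa, pos_part_ge0 Bb).
set m := meet a b; apply: le_anti; last exact: meet_glb.
have le_mA : le m (meetsup (pos_part A) m).
  by have := meetsup_ge m Aa; rewrite meet_idPl //; apply: le_meetl.
have le_mB : le m (meetsup (pos_part B) m).
  by have := meetsup_ge m Bb; rewrite meet_idPl //; apply: le_meetr.
apply: le_trans (meet_glb le_mA le_mB) _.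
by rewrite !meetsup_pos_part // AB0; apply: le_meetr.
Qed.

Lemma pmeet_sadd_pdisjoint A B C D :
  nonneg A -> nonneg B -> nonneg C -> nonneg D -> pdisjoint A B -> pdisjoint C D ->
  pmeet (sadd A C) (sadd B D) = sadd (pmeet A D) (pmeet B C).
Proof.
move=> A_ge0 B_ge0 C_ge0 D_ge0 AB0 CD0; apply/seteqP; split.
  move=> _ [_ [a [c [Aa Cc ->]]] [_ [b [d [Bb Dd ->]]] <-]].
  exists (meet a d), (meet b c); split; [by exists a => //; exists d | by exists b => //; exists c |].
  by apply: meet_add_disjoint; auto.
move=> _ [_ [_ [[a Aa [d Dd <-]] [b Bb [c Cc <-]] ->]]].
exists (a + c); first by exists a, c.
exists (b + d); first by exists b, d.
by apply: meet_add_disjoint; auto.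
Qed.

Lemma smeet_sadd_disjoint x y v w :
  updirected le x -> updirected le y -> updirected le v -> updirected le w ->
  sle le szero x -> sle le szero y -> sle le szero v -> sle le szero w ->
  sequiv le (smeet le x y) szero -> sequiv le (smeet le v w) szero ->
  sequiv le (smeet le (sadd x v) (sadd y w)) (sadd (smeet le x w) (smeet le y v)).
Proof.
move=> dx dy dv dw px py pv pw xy0 vw0.
have eX := meetsup_pos_part (updirected_neq0 dx) px.
have eY := meetsup_pos_part (updirected_neq0 dy) py.
have eV := meetsup_pos_part (updirected_neq0 dv) pv.
have eW := meetsup_pos_part (updirected_neq0 dw) pw.
apply/sequivP => // z; rewrite meetsup_smeet //.
rewrite -(meetsup_sadd _ _ _ _ eX eV) // -(meetsup_sadd _ _ _ _ eY eW) //.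
rewrite -meetsup_pmeet // pmeet_sadd_pdisjoint; try exact: pos_part_ge0.
- apply: meetsup_sadd => // z'; rewrite meetsup_pmeet // meetsup_smeet //.
    by rewrite eX eW.
  by rewrite eY eV.
- exact: pos_part_pdisjoint.
- exact: pos_part_pdisjoint.
Qed.

Lemma smeet_smeet_disjoint x y v w :
  updirected le x -> updirected le y -> updirected le v -> updirected le w ->
  sle le szero v -> sle le szero w -> sequiv le (smeet le x y) szero ->
  sequiv le (smeet le (smeet le x w) (smeet le y v)) szero.
Proof.
move=> dx dy dv dw /sle_szeroP v_ge0 /sle_szeroP w_ge0 /smeet_szeroP xy0.
apply/smeet_szeroP => // z; rewrite !meetsup_smeet //; apply: le_anti.
  by rewrite -xy0 //; apply: meet_mono; apply: le_meetl.
have z0_le_x : le (meet z 0) (meetsup x z) by rewrite -xy0 //; apply: le_meetl.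
have z0_le_y : le (meet z 0) (meetsup y z) by rewrite -xy0 //; apply: le_meetr.
by apply: meet_glb; apply: meet_glb; auto.
Qed.

End SupCompletion.

Theorem mainTheorem15 (R : realType) (V : lmodType R) (le : V -> V -> Prop)
  (hX : riesz_space le) (hD : dedekind_complete le)
  (x y v w : set V)
  (dx : updirected le x) (dy : updirected le y)
  (dv : updirected le v) (dw : updirected le w)
  (px : sle le szero x) (py : sle le szero y)
  (pv : sle le szero v) (pw : sle le szero w)
  (hxy : sequiv le (smeet le x y) szero)
  (hvw : sequiv le (smeet le v w) szero) :
  sequiv le (smeet le (sadd x v) (sadd y w))
            (sadd (smeet le x w) (smeet le y v)) /\
  sequiv le (smeet le (smeet le x w) (smeet le y v)) szero.
Proof.
have [lexx [le_anti [le_trans [leD2r [_ has_join]]]]] := hX.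
split; first exact: smeet_sadd_disjoint.
exact: smeet_smeet_disjoint.
Qed.
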